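(* A map $f \colon Y \to X$ in $\widehat{\square}_\vee$ has the right lifting property against all maps $\delta_k \hat{\times} m$ ($k \in \{0,1\}$, $m$ a monomorphism) if and only if it is an unbiased fibration, i.e. it has the right lifting property against $r \hat{\times}_B m$ for all $r \colon B \to \mathbb{I}$ and all monomorphisms $m \colon A \rightarrowtail B$.
   Context: Semilattices: sets with an associative, commutative, idempotent binary operation $\vee$; homomorphisms preserve $\vee$. Let $\square_\vee$ be the category whose objects are the semilattices $[1]^n$ ($n\in\mathbb{N}$, $[1]=\{0<1\}$ with $\vee=\max$, pointwise structure) and whose morphisms are all semilattice homomorphisms between them. Fix a strongly inaccessible cardinal $\kappa$ and let $\widehat{\square}_\vee$ be the category of presheaves on $\square_\vee$ valued in $\kappa$-small sets. $\mathbb{I}$ is the representable presheaf on $[1]$, $\delta_k \colon 1 \to \mathbb{I}$ the endpoint inclusions. For $f\colon X\to Y$, $g\colon X'\to Y'$, the pushout product $f\hat\times g$ is the induced map $(X\times Y')\sqcup_{X\times X'}(Y\times X')\to Y\times Y'$. For $r\colon B\to\mathbb I$ and a mono $m\colon A\to B$, $M_r(m)$ is the pushout of $m$ and $\langle rm,\mathrm{id}_A\rangle\colon A\to\mathbb I\times A$, and $r\hat\times_B m\colon M_r(m)\to\mathbb I\times B$ is the unique map restricting to $\langle r,\mathrm{id}_B\rangle$ on $B$ and to $\mathbb I\times m$ on $\mathbb I\times A$. *)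

From Stdlib Require Import Relations FunctionalExtensionality PropExtensionality
  ProofIrrelevance ClassicalEpsilon.
From HB Require Import structures.
From mathcomp Require Import all_boot.

Set Implicit Arguments.
Unset Strict Implicit.
Unset Printing Implicit Defensive.

(* The object [1]^n, with pointwise max as join. *)
Definition cube (n : nat) := {ffun 'I_n -> bool}.
Definition cjoin (n : nat) (x y : cube n) : cube n := [ffun i => x i || y i].

Record hom (m n : nat) := Hom {
  homf :> cube m -> cube n ;
  hom_join : forall x y, homf (cjoin x y) = cjoin (homf x) (homf y) }.

Lemma hom_ext m n (f g : hom m n) : (forall x, f x = g x) -> f = g.
Proof.
case: f g => f Hf [g Hg] /= E.
have ? : f = g := functional_extensionality _ _ E. subst g.
f_equal; apply: proof_irrelevance.
Qed.

Definition hom_id n : hom n n := @Hom n n (fun x => x) (fun _ _ => erefl).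

Lemma hom_comp_join m n p (g : hom n p) (f : hom m n) x y :
  g (f (cjoin x y)) = cjoin (g (f x)) (g (f y)).
Proof. by rewrite !hom_join. Qed.

Definition hom_comp m n p (g : hom n p) (f : hom m n) : hom m p :=
  @Hom m p (fun x => g (f x)) (hom_comp_join g f).

(* ---------- Presheaves (valued in a fixed universe = kappa-small sets) ---------- *)
Record psh := Psh {
  ob :> nat -> Type ;
  act : forall m n, hom m n -> ob n -> ob m ;
  act_id : forall n x, act (hom_id n) x = x ;
  act_comp : forall m n p (f : hom m n) (g : hom n p) x,
      act (hom_comp g f) x = act f (act g x) }.
Arguments act _ {m n} _ _.

Unset Implicit Arguments.
Record nat_tr (P Q : psh) := NatTr {
  ntf :> forall n, P n -> Q n ;
  nt_nat : forall m n (f : hom m n) x, ntf m (act P f x) = act Q f (ntf n x) }.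
Arguments ntf {P Q} _ _ _.
Arguments NatTr P Q _ _.
Arguments nt_nat {P Q} _ _ _ _ _.
Set Implicit Arguments.

Definition eq_nt (P Q : psh) (a b : nat_tr P Q) := forall n x, a n x = b n x.

Definition nt_id (P : psh) : nat_tr P P := @NatTr P P (fun n x => x) (fun _ _ _ _ => erefl).

Lemma nt_comp_nat (P Q R : psh) (g : nat_tr Q R) (f : nat_tr P Q) m n (h : hom m n) x :
  g m (f m (act P h x)) = act R h (g n (f n x)).
Proof. by rewrite !nt_nat. Qed.

Definition nt_comp (P Q R : psh) (g : nat_tr Q R) (f : nat_tr P Q) : nat_tr P R :=
  @NatTr P R (fun n x => g n (f n x)) (nt_comp_nat g f).

Definition mono (A B : psh) (m : nat_tr A B) : Prop :=
  forall (Z : psh) (u v : nat_tr Z A), eq_nt (nt_comp m u) (nt_comp m v) -> eq_nt u v.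

Definition rlp (A B : psh) (i : nat_tr A B) (Y X : psh) (f : nat_tr Y X) : Prop :=
  forall (u : nat_tr A Y) (v : nat_tr B X),
    eq_nt (nt_comp f u) (nt_comp v i) ->
    exists w : nat_tr B Y, eq_nt (nt_comp w i) u /\ eq_nt (nt_comp f w) v.

Definition term_psh : psh :=
  @Psh (fun _ => unit) (fun _ _ _ x => x) (fun _ _ => erefl) (fun _ _ _ _ _ _ => erefl).

Section Prod.
Variables P Q : psh.
Definition prod_act m n (f : hom m n) (x : P n * Q n) : P m * Q m :=
  (act P f x.1, act Q f x.2).
Lemma prod_act_id n x : prod_act (hom_id n) x = x.
Proof. by case: x => a b; rewrite /prod_act /= !act_id. Qed.
Lemma prod_act_comp m n p (f : hom m n) (g : hom n p) x :
  prod_act (hom_comp g f) x = prod_act f (prod_act g x).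
Proof. by case: x => a b; rewrite /prod_act /= !act_comp. Qed.
Definition prod_psh : psh :=
  @Psh (fun n => (P n * Q n)%type) prod_act prod_act_id prod_act_comp.
End Prod.

Definition nt_pair (Z P Q : psh) (f : nat_tr Z P) (g : nat_tr Z Q) : nat_tr Z (prod_psh P Q).
Proof.
refine (@NatTr Z (prod_psh P Q) (fun n z => (f n z, g n z)) _).
by move=> m n h x /=; rewrite /prod_act /= !nt_nat.
Defined.

Definition nt_prod (P P' Q Q' : psh) (f : nat_tr P P') (g : nat_tr Q Q') :
  nat_tr (prod_psh P Q) (prod_psh P' Q').
Proof.
refine (@NatTr (prod_psh P Q) (prod_psh P' Q') (fun n x => (f n x.1, g n x.2)) _).
by move=> m n h [a b] /=; rewrite /prod_act /= !nt_nat.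
Defined.

Lemma I_act_id n (x : hom n 1) : hom_comp x (hom_id n) = x.
Proof. exact: hom_ext. Qed.
Lemma I_act_comp m n p (f : hom m n) (g : hom n p) (x : hom p 1) :
  hom_comp x (hom_comp g f) = hom_comp (hom_comp x g) f.
Proof. exact: hom_ext. Qed.
Definition Ipsh : psh :=
  @Psh (fun n => hom n 1) (fun m n f x => hom_comp x f) I_act_id I_act_comp.

Lemma const_join n (k : bool) (x y : cube n) :
  ([ffun _ => k] : cube 1) = cjoin [ffun _ => k] [ffun _ => k].
Proof. by apply/ffunP => i; rewrite !ffunE orbb. Qed.
Definition const_hom n (k : bool) : hom n 1 :=
  @Hom n 1 (fun _ => [ffun _ => k]) (@const_join n k).

Definition delta (k : bool) : nat_tr term_psh Ipsh.
Proof.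
refine (@NatTr term_psh Ipsh (fun n _ => const_hom n k) _).
by move=> m n f x; apply: hom_ext.
Defined.

Section Pushout.
Variables A B C : psh.
Variables (f : nat_tr A B) (g : nat_tr A C).

Definition sact m n (h : hom m n) (x : B n + C n) : B m + C m :=
  match x with inl b => inl (act B h b) | inr c => inr (act C h c) end.

Inductive prel n : B n + C n -> B n + C n -> Prop :=
  prel_intro a : prel (inl (f n a)) (inr (g n a)).

Definition eqv n := clos_refl_sym_trans _ (@prel n).

Lemma eqv_refl n (x : B n + C n) : eqv x x.
Proof. exact: rst_refl. Qed.
Lemma eqv_sym n (x y : B n + C n) : eqv x y -> eqv y x.
Proof. exact: rst_sym. Qed.
Lemma eqv_trans n (x y z : B n + C n) : eqv x y -> eqv y z -> eqv x z.
Proof. exact: rst_trans. Qed.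

Lemma eqv_act m n (h : hom m n) x y : eqv x y -> eqv (sact h x) (sact h y).
Proof.
elim=> {x y} [x y [a]| x | x y _ IH | x y z _ IH1 _ IH2].
- apply: rst_step; rewrite /= -!nt_nat; exact: prel_intro.
- exact: rst_refl.
- exact: rst_sym.
- exact: rst_trans IH2.
Qed.

Definition qob n := {S : B n + C n -> Prop | exists x, S = @eqv n x}.

Lemma sig_ext n (s t : qob n) : proj1_sig s = proj1_sig t -> s = t.
Proof. case: s t => s Hs [t Ht] /= E; subst t; f_equal; apply: proof_irrelevance. Qed.

Definition cls n (x : B n + C n) : qob n := exist _ (@eqv n x) (ex_intro _ x erefl).

Lemma eqv_pred n (x y : B n + C n) : eqv x y -> eqv x = eqv y.
Proof.
move=> E; apply: functional_extensionality => z; apply: propositional_extensionality.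
split=> H.
- exact: eqv_trans (eqv_sym E) H.
- exact: eqv_trans E H.
Qed.

Lemma cls_surj n (S : qob n) : exists x, S = cls x.
Proof. case: S => S [x Ex]; exists x; exact: sig_ext. Qed.

Lemma qact_proof m n (h : hom m n) (S : qob n) :
  exists x, (fun y => exists x, proj1_sig S x /\ eqv (sact h x) y) = eqv x.
Proof.
case: S => S [x0 E0] /=; exists (sact h x0).
apply: functional_extensionality => y; apply: propositional_extensionality; split.
- by case=> x [Sx E]; rewrite E0 in Sx; exact: eqv_trans (eqv_act h Sx) E.
- by move=> E; exists x0; split => //; rewrite E0; exact: rst_refl.
Qed.

Definition qact m n (h : hom m n) (S : qob n) : qob m :=
  exist _ _ (qact_proof h S).

Lemma qact_cls m n (h : hom m n) x : qact h (cls x) = cls (sact h x).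
Proof.
apply: sig_ext => /=; apply: functional_extensionality => y;
  apply: propositional_extensionality; split.
- by case=> z [Sz E]; exact: eqv_trans (eqv_act h Sz) E.
- by move=> E; exists x; split => //; exact: rst_refl.
Qed.

Lemma qact_id n (S : qob n) : qact (hom_id n) S = S.
Proof. by case: (cls_surj S) => x ->; rewrite qact_cls; case: x => [b|c] /=; rewrite act_id. Qed.

Lemma qact_comp m n p (h : hom m n) (k : hom n p) S :
  qact (hom_comp k h) S = qact h (qact k S).
Proof.
by case: (cls_surj S) => x ->; rewrite !qact_cls; case: x => [b|c] /=; rewrite act_comp.
Qed.

Definition pushout : psh := @Psh qob qact qact_id qact_comp.

Variables (Z : psh) (h1 : nat_tr B Z) (h2 : nat_tr C Z).
Hypothesis H : eq_nt (nt_comp h1 f) (nt_comp h2 g).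

Definition sdesc n (x : B n + C n) : Z n :=
  match x with inl b => h1 n b | inr c => h2 n c end.

Lemma sdesc_eqv n (x y : B n + C n) : eqv x y -> sdesc x = sdesc y.
Proof.
elim=> {x y} [x y [a]| x | x y _ IH | x y z _ IH1 _ IH2] //.
- exact: H.
- by rewrite IH1.
Qed.

Definition rep n (S : qob n) : B n + C n :=
  proj1_sig (constructive_indefinite_description _ (proj2_sig S)).

Lemma rep_spec n (S : qob n) : proj1_sig S = eqv (rep S).
Proof. exact: (proj2_sig (constructive_indefinite_description _ (proj2_sig S))). Qed.

Definition qdesc n (S : qob n) : Z n := sdesc (rep S).

Lemma qdesc_cls n (x : B n + C n) : qdesc (cls x) = sdesc x.
Proof.
rewrite /qdesc; apply: sdesc_eqv.
have E := rep_spec (cls x); simpl in E.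
have Hx : eqv x x := eqv_refl x.
by rewrite E in Hx.
Qed.

Lemma qdesc_nat m n (h : hom m n) (S : qob n) :
  qdesc (qact h S) = act Z h (qdesc S).
Proof.
case: (cls_surj S) => x ->; rewrite qact_cls !qdesc_cls.
by case: x => [b|c] /=; rewrite nt_nat.
Qed.

Definition pushout_desc : nat_tr pushout Z := @NatTr pushout Z qdesc qdesc_nat.
End Pushout.

(* For f : X -> Y and g : X' -> Y', the map (X x Y') +_{X x X'} (Y x X') -> Y x Y'. *)
Definition pp (X Y X' Y' : psh) (f : nat_tr X Y) (g : nat_tr X' Y') :
  nat_tr (pushout (nt_prod (nt_id X) g) (nt_prod f (nt_id X'))) (prod_psh Y Y') :=
  @pushout_desc _ _ _ (nt_prod (nt_id X) g) (nt_prod f (nt_id X')) (prod_psh Y Y')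
    (nt_prod f (nt_id Y')) (nt_prod (nt_id Y) g) (fun _ _ => erefl).

(* M_r(m) = pushout of m and <r m, id_A> : A -> I x A; and
   r x^_B m : M_r(m) -> I x B, restricting to <r, id_B> on B and I x m on I x A. *)
Definition Mr (A B : psh) (r : nat_tr B Ipsh) (m : nat_tr A B) : psh :=
  pushout m (nt_pair (nt_comp r m) (nt_id A)).

Definition rpp (A B : psh) (r : nat_tr B Ipsh) (m : nat_tr A B) :
  nat_tr (Mr r m) (prod_psh Ipsh B) :=
  @pushout_desc _ _ _ m (nt_pair (nt_comp r m) (nt_id A)) (prod_psh Ipsh B)
    (nt_pair r (nt_id B)) (nt_prod (nt_id Ipsh) m) (fun _ _ => erefl).

Definition unbiased_fibration (Y X : psh) (f : nat_tr Y X) : Prop :=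
  forall (A B : psh) (r : nat_tr B Ipsh) (m : nat_tr A B), mono m -> rlp (rpp r m) f.

From mathcomp Require Import all_boot.
From Stdlib Require Import Relations.

Set Implicit Arguments.
Unset Strict Implicit.
Unset Printing Implicit Defensive.

(* For a constant map [r = k], the domain [B +_A (I x A)] of [r x^_B m] is the
   domain [(1 x B) +_(1 x A) (I x A)] of [delta_k x^ m], so the two maps are
   isomorphic over [I x B]; this gives one direction.
   Conversely, let [(u, v)] be a lifting problem against [r x^_B m]. The join
   on [I] (with unit [0] and absorbing [1]) gives the connection
   [(s, b) |-> (r b \/ s, b)] of [I x B], which sends the face [s = 0] onto the
   graph of [r] and [I x A] into [I x A]. Precomposing [(u, v)] with it yields a
   problem against [delta_0 x^ m], solved by some [w1 : I x B -> Y] with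
   [w1 (0, -) = u] on [B]. The homotopy [(t, x) |-> x "shifted by \/ t"] of
   [M_r(m)], together with [w1 (1, -)] on the top face, is a problem against
   [delta_1 x^ (r x^_B m)] over [v (s \/ t, b)]; the restriction to [t = 0] of
   its solution solves the original problem. *)

Lemma ijoin_morph n (s t : hom n 1) x y :
  cjoin (s (cjoin x y)) (t (cjoin x y)) = cjoin (cjoin (s x) (t x)) (cjoin (s y) (t y)).
Proof. by rewrite !hom_join; apply/ffunP => i; rewrite !ffunE orbACA. Qed.

Definition ijoin n (s t : hom n 1) : hom n 1 :=
  @Hom n 1 (fun x => cjoin (s x) (t x)) (ijoin_morph s t).

Lemma ijoin0 n (s : hom n 1) : ijoin s (const_hom n false) = s.
Proof. by apply: hom_ext => x; apply/ffunP => i; rewrite !ffunE orbF. Qed.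

Lemma ijoin1 n (s : hom n 1) : ijoin s (const_hom n true) = const_hom n true.
Proof. by apply: hom_ext => x; apply/ffunP => i; rewrite !ffunE orbT. Qed.

Lemma ijoin_comp m n (s t : hom n 1) (h : hom m n) :
  hom_comp (ijoin s t) h = ijoin (hom_comp s h) (hom_comp t h).
Proof. exact: hom_ext. Qed.

Lemma const_hom_comp m n k (h : hom m n) : hom_comp (const_hom n k) h = const_hom m k.
Proof. exact: hom_ext. Qed.

Lemma yoneda_act_id N n (x : hom n N) : hom_comp x (hom_id n) = x.
Proof. exact: hom_ext. Qed.

Lemma yoneda_act_comp N m n p (f : hom m n) (g : hom n p) (x : hom p N) :
  hom_comp x (hom_comp g f) = hom_comp (hom_comp x g) f.
Proof. exact: hom_ext. Qed.

Definition yoneda N : psh :=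
  @Psh (fun n => hom n N) (fun m n f x => hom_comp x f)
    (@yoneda_act_id N) (@yoneda_act_comp N).

Definition yoneda_elt (A : psh) N (x : A N) : nat_tr (yoneda N) A.
Proof.
refine (@NatTr (yoneda N) A (fun k h => act A h x) _).
by move=> k n g h /=; rewrite act_comp.
Defined.

Lemma monoP (A B : psh) (m : nat_tr A B) : mono m <-> forall n, injective (m n).
Proof.
split=> [Hm n x y Exy | Hm Z u v Euv n z]; last exact/Hm/Euv.
have E : eq_nt (yoneda_elt x) (yoneda_elt y) by apply: Hm => k h /=; rewrite !nt_nat Exy.
by have := E n (hom_id n); rewrite /= !act_id.
Qed.

Definition to_term (B : psh) : nat_tr B term_psh :=
  @NatTr B term_psh (fun _ _ => tt) (fun _ _ _ _ => erefl).

Definition const_I (k : bool) (B : psh) : nat_tr B Ipsh := nt_comp (delta k) (to_term B).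

Definition nt_snd (P Q : psh) : nat_tr (prod_psh P Q) Q :=
  @NatTr (prod_psh P Q) Q (fun n x => x.2) (fun _ _ _ _ => erefl).

(* [i'] is a retract of [i] in the slice over [E]. *)
Lemma rlp_retract (D D' E Y X : psh) (i : nat_tr D E) (i' : nat_tr D' E)
    (s : nat_tr D' D) (p : nat_tr D D') (f : nat_tr Y X) :
  eq_nt (nt_comp i s) i' -> eq_nt (nt_comp i' p) i -> eq_nt (nt_comp p s) (nt_id D') ->
  rlp i f -> rlp i' f.
Proof.
move=> is_i' i'p_i ps_id Hi u v Huv.
have Hup : eq_nt (nt_comp f (nt_comp u p)) (nt_comp v i).
  by move=> n x /=; rewrite -(i'p_i n x); apply: Huv.
have [w [wi fw]] := Hi _ _ Hup.
exists w; split=> // n x /=.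
transitivity (u n (p n (s n x))); last exact: (congr1 (u n) (ps_id n x)).
by rewrite -(is_i' n x); apply: wi.
Qed.

Section PushoutFacts.
Variables (A B C : psh) (f : nat_tr A B) (g : nat_tr A C).

Lemma cls_glue n (a : A n) : cls f g (inl (f n a)) = cls f g (inr (g n a)).
Proof. by apply: sig_ext; apply: eqv_pred; apply: rst_step; apply: prel_intro. Qed.

Lemma eq_nt_pushout (Z : psh) (a b : nat_tr (pushout f g) Z) :
  (forall n x, a n (cls f g x) = b n (cls f g x)) -> eq_nt a b.
Proof. by move=> E n S; have [x ->] := cls_surj S; apply: E. Qed.

Definition po_inl : nat_tr B (pushout f g).
Proof.
refine (@NatTr B (pushout f g) (fun n b => cls f g (inl b)) _).
by move=> m n h b /=; rewrite qact_cls.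
Defined.

Definition po_inr : nat_tr C (pushout f g).
Proof.
refine (@NatTr C (pushout f g) (fun n c => cls f g (inr c)) _).
by move=> m n h c /=; rewrite qact_cls.
Defined.

Section ProductDesc.
Variables (P Z : psh) (h1 : nat_tr (prod_psh P B) Z) (h2 : nat_tr (prod_psh P C) Z).
Hypothesis h12 : forall n p a, h1 n (p, f n a) = h2 n (p, g n a).

Definition prod_sdesc n (p : P n) (x : B n + C n) : Z n :=
  match x with inl b => h1 n (p, b) | inr c => h2 n (p, c) end.

Lemma prod_sdesc_eqv n p (x y : B n + C n) : eqv f g x y -> prod_sdesc p x = prod_sdesc p y.
Proof.
elim=> {x y} [x y [a] | x | x y _ IH | x y z _ IH1 _ IH2] //=.
by rewrite IH1.
Qed.

Lemma prod_sdesc_rep n p (x : B n + C n) : prod_sdesc p (rep (cls f g x)) = prod_sdesc p x.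
Proof.
apply: prod_sdesc_eqv; have Exx : eqv f g x x by apply: rst_refl.
by move: Exx; rewrite -[eqv f g x]/(sval (cls f g x)) rep_spec.
Qed.

(* [P x -] preserves pushouts, so such a pair of maps descends to [P x pushout f g]. *)
Definition prod_pushout_desc : nat_tr (prod_psh P (pushout f g)) Z.
Proof.
refine (@NatTr (prod_psh P (pushout f g)) Z (fun n x => prod_sdesc x.1 (rep x.2)) _).
move=> m n h [p S]; have [x ->] := cls_surj S.
rewrite /= /prod_act /= qact_cls !prod_sdesc_rep.
by case: x => [b|c] /=; rewrite -nt_nat.
Defined.

End ProductDesc.
End PushoutFacts.

Section DeltaPushoutProduct.
Variables (k : bool) (A B : psh) (m : nat_tr A B).
Let r := const_I k B.
Let g := nt_pair (nt_comp r m) (nt_id A).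
Let f1 := nt_prod (nt_id term_psh) m.
Let g1 := nt_prod (delta k) (nt_id A).

Lemma pp_to_rpp_glue : eq_nt (nt_comp (nt_comp (po_inl m g) (nt_snd term_psh B)) f1)
                             (nt_comp (po_inr m g) g1).
Proof. by move=> n [[] a]; apply: cls_glue. Qed.

Definition pp_to_rpp : nat_tr (pushout f1 g1) (Mr r m) := pushout_desc pp_to_rpp_glue.

Lemma rpp_to_pp_glue : eq_nt (nt_comp (nt_comp (po_inl f1 g1) (nt_pair (to_term B) (nt_id B))) m)
                             (nt_comp (po_inr f1 g1) g).
Proof. by move=> n a; apply: (cls_glue f1 g1 (tt, a)). Qed.

Definition rpp_to_pp : nat_tr (Mr r m) (pushout f1 g1) := pushout_desc rpp_to_pp_glue.

Lemma rpp_pp_to_rpp : eq_nt (nt_comp (rpp r m) pp_to_rpp) (pp (delta k) m).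
Proof.
apply: eq_nt_pushout => n x; rewrite /= (qdesc_cls pp_to_rpp_glue).
by case: x => [[[] b] | [s a]] /=; rewrite !qdesc_cls.
Qed.

Lemma pp_rpp_to_pp : eq_nt (nt_comp (pp (delta k) m) rpp_to_pp) (rpp r m).
Proof.
apply: eq_nt_pushout => n x; rewrite /= (qdesc_cls rpp_to_pp_glue).
by case: x => [b | [s a]] /=; rewrite !qdesc_cls.
Qed.

Lemma rpp_to_ppK : eq_nt (nt_comp rpp_to_pp pp_to_rpp) (nt_id _).
Proof.
apply: eq_nt_pushout => n x; rewrite /= (qdesc_cls pp_to_rpp_glue).
by case: x => [[[] b] | [s a]] /=; rewrite (qdesc_cls rpp_to_pp_glue).
Qed.

Lemma rlp_pp_delta (Y X : psh) (f : nat_tr Y X) :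
  rlp (rpp (const_I k B) m) f -> rlp (pp (delta k) m) f.
Proof. exact: rlp_retract rpp_pp_to_rpp pp_rpp_to_pp rpp_to_ppK. Qed.

End DeltaPushoutProduct.

Lemma mono_rpp (A B : psh) (r : nat_tr B Ipsh) (m : nat_tr A B) : mono m -> mono (rpp r m).
Proof.
move/monoP=> m_inj; apply/monoP => n S1 S2.
have [x ->] := cls_surj S1; have [y ->] := cls_surj S2.
rewrite /= !qdesc_cls //.
case: x => [b | [s a]]; case: y => [b' | [s' a']] /= [E1 E2].
- by rewrite E2.
- by rewrite -E1 E2; apply: cls_glue.
- by rewrite E1 -E2; symmetry; apply: cls_glue.
- by rewrite E1 (m_inj _ _ _ E2).
Qed.

Section UnbiasedLift.
Variables (Y X : psh) (f : nat_tr Y X) (A B : psh) (r : nat_tr B Ipsh) (m : nat_tr A B).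
Let g := nt_pair (nt_comp r m) (nt_id A).
Variables (u : nat_tr (Mr r m) Y) (v : nat_tr (prod_psh Ipsh B) X).
Hypothesis fu_vrpp : eq_nt (nt_comp f u) (nt_comp v (rpp r m)).

Lemma f_u_inr n s a : f n (u n (cls m g (inr (s, a)))) = v n (s, m n a).
Proof. by have := fu_vrpp (cls m g (inr (s, a))); rewrite /= qdesc_cls. Qed.

Lemma act_u_cls n p (h : hom p n) x : act Y h (u n (cls m g x)) = u p (cls m g (sact h x)).
Proof. by rewrite -nt_nat /= qact_cls. Qed.

Definition connection : nat_tr (prod_psh Ipsh B) (prod_psh Ipsh B).
Proof.
refine (@NatTr (prod_psh Ipsh B) (prod_psh Ipsh B)
  (fun n x => (ijoin (r n x.2) x.1, x.2)) _).
by move=> p n h [s b]; rewrite /= /prod_act /= ijoin_comp nt_nat.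
Defined.

Let f0 := nt_prod (nt_id term_psh) m.
Let g0 := nt_prod (delta false) (nt_id A).

Definition connection_tube : nat_tr (prod_psh Ipsh A) (Mr r m).
Proof.
refine (@NatTr (prod_psh Ipsh A) (Mr r m)
  (fun n x => cls m g (inr (ijoin (r n (m n x.2)) x.1, x.2))) _).
by move=> p n h [s a]; rewrite /= qact_cls /= /prod_act /= ijoin_comp !nt_nat.
Defined.

Lemma connection_boundary_glue :
  eq_nt (nt_comp (nt_comp (po_inl m g) (nt_snd term_psh B)) f0) (nt_comp connection_tube g0).
Proof. by move=> n [[] a] /=; rewrite ijoin0; apply: cls_glue. Qed.

(* The connection [(s, b) |-> (r b \/ s, b)] restricted to the domain of [delta 0 x^ m]. *)
Definition connection_boundary : nat_tr (pushout f0 g0) (Mr r m) :=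
  pushout_desc connection_boundary_glue.

Lemma rpp_connection_boundary :
  eq_nt (nt_comp (rpp r m) connection_boundary) (nt_comp connection (pp (delta false) m)).
Proof.
apply: eq_nt_pushout => n x; rewrite /= (qdesc_cls connection_boundary_glue).
by case: x => [[[] b] | [s a]]; rewrite /= !qdesc_cls //= ijoin0.
Qed.

Lemma connection_lift : rlp (pp (delta false) m) f ->
  exists w1 : nat_tr (prod_psh Ipsh B) Y,
    [/\ forall n b, w1 n (const_hom n false, b) = u n (cls m g (inl b)),
        forall n s a, w1 n (s, m n a) = u n (cls m g (inr (ijoin (r n (m n a)) s, a)))
      & forall n s b, f n (w1 n (s, b)) = v n (ijoin (r n b) s, b)].
Proof.
move=> Hrlp.
have comm : eq_nt (nt_comp f (nt_comp u connection_boundary))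
                  (nt_comp (nt_comp v connection) (pp (delta false) m)).
  move=> n x /=; rewrite -[RHS]/(v n (nt_comp connection (pp (delta false) m) n x)).
  by rewrite -rpp_connection_boundary; apply: fu_vrpp.
have [w1 [w1_bd fw1]] := Hrlp _ _ comm.
exists w1; split=> [n b | n s a | n s b]; last exact: fw1.
- have := w1_bd n (cls f0 g0 (inl (tt, b))).
  by rewrite /= (qdesc_cls connection_boundary_glue) !qdesc_cls.
- have := w1_bd n (cls f0 g0 (inr (s, a))).
  by rewrite /= (qdesc_cls connection_boundary_glue) !qdesc_cls.
Qed.

Section HomotopyLift.
Variable w1 : nat_tr (prod_psh Ipsh B) Y.
Hypothesis w1_bottom : forall n b, w1 n (const_hom n false, b) = u n (cls m g (inl b)).
Hypothesis w1_tube :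
  forall n s a, w1 n (s, m n a) = u n (cls m g (inr (ijoin (r n (m n a)) s, a))).
Hypothesis f_w1 : forall n s b, f n (w1 n (s, b)) = v n (ijoin (r n b) s, b).

Definition tube_shift : nat_tr (prod_psh Ipsh (prod_psh Ipsh A)) Y.
Proof.
refine (@NatTr (prod_psh Ipsh (prod_psh Ipsh A)) Y
  (fun n x => u n (cls m g (inr (ijoin x.2.1 x.1, x.2.2)))) _).
by move=> p n h [t [s a]]; rewrite act_u_cls /= /prod_act /= ijoin_comp.
Defined.

Lemma w1_tube_shift n t a : w1 n (t, m n a) = tube_shift n (t, g n a).
Proof. exact: w1_tube. Qed.

(* [(t, [b]) |-> w1 (t, b)] and [(t, [s, a]) |-> u [s \/ t, a]] *)
Definition homotopy : nat_tr (prod_psh Ipsh (Mr r m)) Y :=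
  prod_pushout_desc w1_tube_shift.

Definition top_face : nat_tr (prod_psh term_psh (prod_psh Ipsh B)) Y.
Proof.
refine (@NatTr (prod_psh term_psh (prod_psh Ipsh B)) Y
  (fun n x => w1 n (const_hom n true, x.2.2)) _).
by move=> p n h [t [s b]]; rewrite -nt_nat /= /prod_act /= const_hom_comp.
Defined.

Let f2 := nt_prod (nt_id term_psh) (rpp r m).
Let g2 := nt_prod (delta true) (nt_id (Mr r m)).

Lemma top_face_glue : eq_nt (nt_comp top_face f2) (nt_comp homotopy g2).
Proof.
move=> n [[] S]; have [x ->] := cls_surj S.
rewrite /= (prod_sdesc_rep w1_tube_shift) qdesc_cls //.
by case: x => [b | [s a]] //=; rewrite w1_tube !ijoin1.
Qed.

Definition join_shift : nat_tr (prod_psh Ipsh (prod_psh Ipsh B)) (prod_psh Ipsh B).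
Proof.
refine (@NatTr (prod_psh Ipsh (prod_psh Ipsh B)) (prod_psh Ipsh B)
  (fun n x => (ijoin x.2.1 x.1, x.2.2)) _).
by move=> p n h [t [s b]]; rewrite /= /prod_act /= ijoin_comp.
Defined.

Lemma homotopy_comm : eq_nt (nt_comp f (pushout_desc top_face_glue))
                            (nt_comp (nt_comp v join_shift) (pp (delta true) (rpp r m))).
Proof.
apply: eq_nt_pushout => n y; rewrite /= (qdesc_cls top_face_glue) !qdesc_cls //.
case: y => [[[] [s b]] | [t S]] /=; first by rewrite f_w1 !ijoin1.
have [x ->] := cls_surj S; rewrite (prod_sdesc_rep w1_tube_shift) qdesc_cls //.
by case: x => [b | [s a]] /=; rewrite ?f_w1 ?f_u_inr.
Qed.

Lemma homotopy_lift : rlp (pp (delta true) (rpp r m)) f ->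
  exists w : nat_tr (prod_psh Ipsh B) Y, eq_nt (nt_comp w (rpp r m)) u /\ eq_nt (nt_comp f w) v.
Proof.
move=> Hrlp; have [w2 [w2_bd fw2]] := Hrlp _ _ homotopy_comm.
exists (nt_comp w2 (nt_pair (const_I false _) (nt_id _))); split.
- apply: eq_nt_pushout => n x.
  have E := w2_bd n (cls f2 g2 (inr (const_hom n false, cls m g x))).
  rewrite /= (qdesc_cls top_face_glue) !qdesc_cls //= (prod_sdesc_rep w1_tube_shift) in E.
  rewrite /= {}E.
  by case: x => [b | [s a]] /=; rewrite ?w1_bottom ?ijoin0.
- by move=> n [s b]; have := fw2 n (const_hom n false, (s, b)); rewrite /= ijoin0.
Qed.

End HomotopyLift.
End UnbiasedLift.

Lemma rlp_rpp_of_pp_delta (Y X : psh) (f : nat_tr Y X) (A B : psh) (r : nat_tr B Ipsh)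
    (m : nat_tr A B) :
  rlp (pp (delta false) m) f -> rlp (pp (delta true) (rpp r m)) f -> rlp (rpp r m) f.
Proof.
move=> lift0 lift1 u v fu_vrpp.
have [w1 [w1_bottom w1_tube f_w1]] := connection_lift fu_vrpp lift0.
exact: homotopy_lift w1_bottom w1_tube f_w1 lift1.
Qed.

Theorem mainTheorem3 (Y X : psh) (f : nat_tr Y X) :
  (forall (k : bool) (A B : psh) (m : nat_tr A B), mono m -> rlp (pp (delta k) m) f)
  <-> unbiased_fibration f.
Proof.
split=> [Hpp A B r m Hm | Hunb k A B m Hm].
- apply: rlp_rpp_of_pp_delta; first exact: Hpp.
  exact/Hpp/mono_rpp.
- exact/rlp_pp_delta/Hunb.
Qed.
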